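(* Let $\mathfrak g(t)=2+\alpha-(N+\alpha)t^{N-2}+(N-2)t^{N+\alpha}$ and $\mathfrak h(t)=\alpha-(N+\alpha)t^N+Nt^{N+\alpha}$. Then $\mathfrak g(t)>\mathfrak g(1)=0$ and $\mathfrak h(t)>\mathfrak h(1)=0$ for all $t\in[0,1)\cup(1,\infty)$. Moreover, if $V$ satisfies (V3), then for all $t\ge0$ and $x\in\mathbb R^N\setminus\{0\}$, $$(\alpha+Nt^{N+\alpha})V(x)-(N+\alpha)t^NV(tx)+(t^{N+\alpha}-1)\nabla V(x)\cdot x\ \ge\ -\frac{(N-2)^2\theta\,\mathfrak g(t)}{4|x|^2}.$$
   Context: $N\ge3$, $\alpha\in(0,N)$. (V3): $V\in C^1(\mathbb R^N,\mathbb R)$ and there is $\theta\in[0,1)$ such that for every $x\neq0$ the map $t\mapsto \frac{NV(tx)+\nabla V(tx)\cdot(tx)}{t^\alpha}+\frac{(N-2)^3\theta}{4t^{\alpha+2}|x|^2}$ is nonincreasing on $(0,\infty)$. *)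

From Stdlib Require Import Reals.
From mathcomp Require Import ssreflect ssrfun ssrbool eqtype ssrnat seq fintype bigop.
Open Scope R_scope.

Definition vec (N : nat) := 'I_N -> R.
Definition vzero {N : nat} : vec N := fun _ => 0.
Definition vadd {N : nat} (x y : vec N) : vec N := fun i => x i + y i.
Definition vsub {N : nat} (x y : vec N) : vec N := fun i => x i - y i.
Definition vscale {N : nat} (t : R) (x : vec N) : vec N := fun i => t * x i.
Definition dot {N : nat} (x y : vec N) : R := \big[Rplus/0]_(i < N) (x i * y i).
Definition vnorm {N : nat} (x : vec N) : R := sqrt (dot x x).

(* real power t^a for t >= 0, with the convention 0^a = 0 (used only for a > 0) *)
Definition rpow (t a : R) : R := if Rle_dec t 0 then 0 else Rpower t a.

Definition has_gradient {N : nat} (V : vec N -> R) (x g : vec N) : Prop :=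
  forall eps, 0 < eps -> exists delta, 0 < delta /\
    forall h : vec N, vnorm h < delta ->
      Rabs (V (vadd x h) - V x - dot g h) <= eps * vnorm h.

Definition vcontinuous {N M : nat} (f : vec N -> vec M) : Prop :=
  forall x eps, 0 < eps -> exists delta, 0 < delta /\
    forall y, vnorm (vsub y x) < delta -> vnorm (vsub (f y) (f x)) < eps.

Definition C1_with_grad {N : nat} (V : vec N -> R) (gradV : vec N -> vec N) : Prop :=
  (forall x, has_gradient V x (gradV x)) /\ vcontinuous gradV.

Definition V3 (N : nat) (alpha : R) (V : vec N -> R) (gradV : vec N -> vec N)
  (theta : R) : Prop :=
  0 <= theta < 1 /\
  forall x : vec N, x <> vzero ->
    let f := fun t => (INR N * V (vscale t x) + dot (gradV (vscale t x)) (vscale t x))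
                        / rpow t alpha
                      + (INR N - 2) ^ 3 * theta / (4 * rpow t (alpha + 2) * vnorm x ^ 2) in
    forall s t, 0 < s -> s <= t -> f t <= f s.

Definition gfun (N : nat) (alpha t : R) : R :=
  2 + alpha - (INR N + alpha) * t ^ (N - 2) + (INR N - 2) * rpow t (INR N + alpha).

Definition hfun (N : nat) (alpha t : R) : R :=
  alpha - (INR N + alpha) * t ^ N + INR N * rpow t (INR N + alpha).

(* Both parts reduce to one calculus principle: if the derivative of a
   function on (0, oo) has the sign of (s - 1) (resp. of (1 - s)), the mean
   value theorem shows the function is minimal (resp. maximal) at 1.
   - g'(s) = (N-2)(N+a) s^(N-3) (s^(a+2) - 1) and h'(s) = N(N+a) s^(N-1) (s^a - 1)
     have the sign of s - 1; the point t = 0 is checked directly.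
   - For the inequality fix x <> 0, let f be the (V3) function along the ray
     through x and K = (N-2)^3 theta / (4|x|^2).  The auxiliary function
       Phi(s) = s^N V(sx) - f(1) s^(N+a) / (N+a) + K s^(N-2) / (N-2)
     satisfies Phi'(s) = s^(N+a-1) (f(s) - f(1)), whose sign is that of 1 - s
     because f is nonincreasing; hence Phi(t) <= Phi(1) for t > 0, and for
     t = 0 by continuity.  The claimed inequality is exactly
     (N+a) (Phi(1) - Phi(t)) >= 0, rearranged (lemma Phi_gap). *)

From HB Require Import structures.
From Coquelicot Require Import Coquelicot.
From Stdlib Require Import Reals Lra Psatz Classical FunctionalExtensionality.
From mathcomp Require Import ssreflect ssrfun ssrbool eqtype ssrnat seq fintype bigop.
From mathcomp Require Import zify.
Open Scope R_scope.

Lemma rpow_pos (s a : R) : 0 < s -> rpow s a = Rpower s a.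
Proof. by move=> Hs; rewrite /rpow; case: Rle_dec => // H; lra. Qed.

Lemma rpow_nonpos (s a : R) : s <= 0 -> rpow s a = 0.
Proof. by move=> Hs; rewrite /rpow; case: Rle_dec => // H; lra. Qed.

Lemma Rpower_base1 (a : R) : Rpower 1 a = 1.
Proof. by rewrite /Rpower ln_1 Rmult_0_r exp_0. Qed.

Lemma rpow_1 (a : R) : rpow 1 a = 1.
Proof. by rewrite rpow_pos ?Rpower_base1 //; lra. Qed.

Lemma Rpower_nat_plus (s b : R) (k : nat) :
  0 < s -> Rpower s (INR k + b) = s ^ k * Rpower s b.
Proof. by move=> Hs; rewrite Rpower_plus Rpower_pow. Qed.

Lemma Rpower_sub1_sign (s b : R) :
  0 < b -> 0 < s -> s <> 1 -> 0 < (s - 1) * (Rpower s b - 1).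
Proof.
move=> Hb Hs Hs1; case: (Rlt_le_dec s 1) => Hlt.
- have := Rlt_Rpower_l s 1 b Hb (conj Hs Hlt); rewrite Rpower_base1; nra.
- have := Rlt_Rpower_l 1 s b Hb ltac:(lra); rewrite Rpower_base1; nra.
Qed.

Lemma is_derive_rpow (s a : R) :
  0 < s -> is_derive (fun t => rpow t a) s (a * Rpower s (a - 1)).
Proof.
move=> Hs; apply: (is_derive_ext_loc (fun t => Rpower t a)).
  apply: (filter_imp (fun t => 0 < t)); last exact: (open_gt 0 s Hs).
  by move=> t Ht; rewrite rpow_pos.
by apply/is_derive_Reals; exact: derivable_pt_lim_power.
Qed.

Lemma rpow_squeeze (s a : R) : 1 < a -> Rabs s < 1 -> 0 <= rpow s a <= Rabs s.
Proof.
move=> Ha Hs; case: (Rle_dec s 0) => Hs0.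
  by rewrite rpow_nonpos //; split; [lra|apply: Rabs_pos].
have Hsp : 0 < s by lra.
rewrite rpow_pos // Rabs_right in Hs *; last lra.
have -> : a = 1 + (a - 1) by ring.
rewrite Rpower_plus Rpower_1 //.
have := Rlt_Rpower_l s 1 (a - 1) ltac:(lra) (conj Hsp Hs).
rewrite Rpower_base1; have := exp_pos ((a - 1) * ln s).
rewrite -/(Rpower s (a - 1)); nra.
Qed.

Lemma continuous_rpow_0 (a : R) : 1 < a -> continuous (fun s => rpow s a) 0.
Proof.
move=> Ha; rewrite /continuous rpow_nonpos; last lra.
apply: (filterlim_le_le (F := locally 0) (fun _ => 0) _ Rabs (Rbar.Finite 0)).
- exists (mkposreal 1 Rlt_0_1) => y Hy; apply: rpow_squeeze => //.
  move: Hy; rewrite /ball /= /AbsRing_ball /abs /minus /plus /opp /=.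
  by rewrite Ropp_0 Rplus_0_r.
- exact: filterlim_const.
- rewrite -{2}Rabs_R0; exact: continuous_Rabs.
Qed.

Lemma is_derive_congr_val (f : R -> R) (s a b : R) :
  is_derive f s a -> a = b -> is_derive f s b.
Proof. by move=> Hf <-. Qed.

Lemma mvt_toward_one (f f' : R -> R) (t : R) :
  (forall s, 0 < s -> is_derive f s (f' s)) -> 0 < t -> t <> 1 ->
  exists c, 0 < c /\ (t < c < 1 \/ 1 < c < t) /\ f t - f 1 = f' c * (t - 1).
Proof.
move=> Hf Ht Ht1.
have Hder a b : 0 < a -> forall c, a <= c <= b -> derivable_pt_lim f c (f' c).
  by move=> Ha c Hc; apply/is_derive_Reals/Hf; lra.
case: (Rlt_le_dec t 1) => Hlt.
- have [c [Hc Hcb]] := MVT_cor2 f f' t 1 Hlt (Hder t 1 Ht).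
  by exists c; split; [lra|split; [lra|lra]].
- have [c [Hc Hcb]] := MVT_cor2 f f' 1 t ltac:(lra) (Hder 1 t Rlt_0_1).
  by exists c; split; [lra|split; [lra|lra]].
Qed.

Lemma strict_min_at_one (f f' : R -> R) :
  (forall s, 0 < s -> is_derive f s (f' s)) ->
  (forall s, 0 < s -> s <> 1 -> 0 < (s - 1) * f' s) ->
  forall t, 0 < t -> t <> 1 -> f 1 < f t.
Proof.
move=> Hf Hsign t Ht Ht1.
have [c [Hc [Hside Hmvt]]] := mvt_toward_one f f' t Hf Ht Ht1.
have Hc1 : c <> 1 by lra.
by have := Hsign c Hc Hc1; case: Hside => ?; nra.
Qed.

Lemma max_at_one (f f' : R -> R) :
  (forall s, 0 < s -> is_derive f s (f' s)) ->
  (forall s, 0 < s -> (s - 1) * f' s <= 0) ->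
  forall t, 0 < t -> f t <= f 1.
Proof.
move=> Hf Hsign t Ht; case: (Req_dec t 1) => [->|Ht1]; first lra.
have [c [Hc [Hside Hmvt]]] := mvt_toward_one f f' t Hf Ht Ht1.
by have := Hsign c Hc; case: Hside => ?; nra.
Qed.

Lemma le_at_0_of_continuous (f : R -> R) (M : R) :
  continuous f 0 -> (forall t, 0 < t -> f t <= M) -> f 0 <= M.
Proof.
move=> Hc Hle.
apply: (closed_filterlim_loc (F := at_right 0) f (fun y => y <= M)).
- by apply: (filterlim_filter_le_1 f _ Hc); apply: filter_le_within.
- by exists (mkposreal 1 Rlt_0_1) => y _ Hy; apply: Hle.
- exact: closed_le.
Qed.

Lemma pow_Rpower_factor_sign (c b s : R) (k : nat) : 0 < c -> 0 < b -> 0 < s -> s <> 1 ->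
  0 < (s - 1) * (c * s ^ k * (Rpower s b - 1)).
Proof.
move=> Hc Hb Hs Hs1.
rewrite (_ : _ * _ = c * s ^ k * ((s - 1) * (Rpower s b - 1))); last by ring.
apply: Rmult_lt_0_compat; last exact: Rpower_sub1_sign.
exact: (Rmult_lt_0_compat _ _ Hc (pow_lt s k Hs)).
Qed.

Section ProfileFunctions.
Variables (N : nat) (alpha : R).
Hypothesis HN : (3 <= N)%coq_nat.
Hypothesis Halpha : 0 < alpha.

Lemma INR_N_ge3 : 3 <= INR N.
Proof. by have := le_INR 3 N HN; rewrite /=; lra. Qed.

Lemma INR_N_sub2 : INR (N - 2) = INR N - 2.
Proof. by rewrite minus_INR; [|lia]. Qed.

Lemma gfun_1 : gfun N alpha 1 = 0.
Proof. by rewrite /gfun rpow_1 pow1; ring. Qed.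

Lemma hfun_1 : hfun N alpha 1 = 0.
Proof. by rewrite /hfun rpow_1 pow1; ring. Qed.

Lemma gfun_derive (s : R) : 0 < s -> is_derive (gfun N alpha) s
  ((INR N - 2) * (INR N + alpha) * s ^ (N - 3) * (Rpower s (alpha + 2) - 1)).
Proof.
move=> Hs; apply: is_derive_congr_val.
  apply: is_derive_plus; first apply: is_derive_minus; first exact: is_derive_const.
    by apply: is_derive_scal; apply: is_derive_pow; exact: is_derive_id.
  by apply: is_derive_scal; exact: is_derive_rpow.
have -> : INR N + alpha - 1 = INR (N - 3) + (alpha + 2).
  by rewrite minus_INR; [rewrite /=; ring|lia].
have -> : Init.Nat.pred (N - 2) = (N - 3)%nat by lia.
rewrite Rpower_nat_plus // INR_N_sub2 /minus /plus /opp /zero /one /=; ring.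
Qed.

Lemma hfun_derive (s : R) : 0 < s -> is_derive (hfun N alpha) s
  (INR N * (INR N + alpha) * s ^ (N - 1) * (Rpower s alpha - 1)).
Proof.
move=> Hs; apply: is_derive_congr_val.
  apply: is_derive_plus; first apply: is_derive_minus; first exact: is_derive_const.
    by apply: is_derive_scal; apply: is_derive_pow; exact: is_derive_id.
  by apply: is_derive_scal; exact: is_derive_rpow.
have -> : INR N + alpha - 1 = INR (N - 1) + alpha.
  by rewrite minus_INR; [rewrite /=; ring|lia].
have -> : Init.Nat.pred N = (N - 1)%nat by lia.
rewrite Rpower_nat_plus // /minus /plus /opp /zero /one /=; ring.
Qed.

Lemma gfun_hfun_strict_min : gfun N alpha 1 = 0 /\ hfun N alpha 1 = 0 /\
  forall t, 0 <= t -> t <> 1 ->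
    gfun N alpha t > gfun N alpha 1 /\ hfun N alpha t > hfun N alpha 1.
Proof.
have HN3 := INR_N_ge3.
split; first exact: gfun_1; split; first exact: hfun_1.
move=> t Ht Ht1; case: (Req_dec t 0) => [->|Ht0].
  rewrite gfun_1 hfun_1 /gfun /hfun rpow_nonpos; last lra.
  by rewrite !pow_i; [lra|lia|lia].
have Htp : 0 < t by lra.
split; apply: Rlt_gt.
- apply: (strict_min_at_one _ _ gfun_derive) => // s Hs Hs1.
  by apply: pow_Rpower_factor_sign => //; nra.
- apply: (strict_min_at_one _ _ hfun_derive) => // s Hs Hs1.
  by apply: pow_Rpower_factor_sign => //; nra.
Qed.

End ProfileFunctions.

Lemma dot_scale_l (N : nat) (h : R) (x y : vec N) : dot (vscale h x) y = h * dot x y.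
Proof.
rewrite /dot /vscale.
apply: (big_ind2 (fun a b => a = h * b)); first by ring.
  by move=> a1 a2 b1 b2 -> ->; ring.
by move=> i _; ring.
Qed.

Lemma dot_scale_r (N : nat) (h : R) (x y : vec N) : dot x (vscale h y) = h * dot x y.
Proof.
rewrite /dot /vscale.
apply: (big_ind2 (fun a b => a = h * b)); first by ring.
  by move=> a1 a2 b1 b2 -> ->; ring.
by move=> i _; ring.
Qed.

Lemma vnorm_scale (N : nat) (h : R) (x : vec N) : vnorm (vscale h x) = Rabs h * vnorm x.
Proof.
rewrite /vnorm dot_scale_l dot_scale_r -Rmult_assoc.
have Hxx : 0 <= dot x x.
  rewrite /dot; apply: (big_ind (fun a => 0 <= a)); first lra.
    by move=> a b Ha Hb; lra.
  by move=> i _; nra.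
rewrite sqrt_mult; [|nra|exact: Hxx].
by rewrite -sqrt_Rsqr_abs.
Qed.

(* Rplus is a commutative monoid law, so bigop's splitting lemmas apply to dot. *)
HB.instance Definition _ :=
  Monoid.isComLaw.Build R 0 Rplus (fun a b c => esym (Rplus_assoc a b c)) Rplus_comm Rplus_0_l.

Lemma vnorm_pos (N : nat) (x : vec N) : x <> vzero -> 0 < vnorm x.
Proof.
move=> Hx.
have [i Hi] : exists i, x i <> 0.
  apply: NNPP => Hnone; apply: Hx; apply: functional_extensionality => i.
  by apply: NNPP => Hi; apply: Hnone; exists i.
apply: sqrt_lt_R0; rewrite /dot (bigD1 i) //=.
have Hrest : 0 <= \big[Rplus/0]_(j < N | j != i) (x j * x j).
  apply: (big_ind (fun a => 0 <= a)); first lra.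
    by move=> a b Ha Hb; lra.
  by move=> j _; nra.
apply: Rplus_lt_le_0_compat Hrest; nra.
Qed.

Lemma vadd_vscale (N : nat) (s h : R) (x : vec N) :
  vadd (vscale s x) (vscale h x) = vscale (s + h) x.
Proof. by apply: functional_extensionality => i; rewrite /vadd /vscale; ring. Qed.

Lemma vscale_1 (N : nat) (x : vec N) : vscale 1 x = x.
Proof. by apply: functional_extensionality => i; rewrite /vscale; ring. Qed.

Lemma is_derive_along_ray (N : nat) (V : vec N -> R) (g x : vec N) (s : R) :
  has_gradient V (vscale s x) g -> is_derive (fun u => V (vscale u x)) s (dot g x).
Proof.
move=> HG; apply/is_derive_Reals => eps Heps.
set nx := vnorm x.
have Hnx : 0 <= nx by apply: sqrt_pos.
have [d [Hd Hclose]] := HG (eps / (nx + 1)) ltac:(apply: Rdiv_lt_0_compat; lra).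
have Hdelta : 0 < d / (nx + 1) by apply: Rdiv_lt_0_compat; lra.
exists (mkposreal _ Hdelta) => h Hh0 /= /Rlt_div_r Hhd.
have Hah : 0 < Rabs h by apply: Rabs_pos_lt.
have Hstep : vnorm (vscale h x) < d.
  by rewrite vnorm_scale -/nx; have := Hhd ltac:(lra); nra.
have := Hclose _ Hstep.
rewrite vadd_vscale dot_scale_r vnorm_scale -/nx => Hrem.
have -> : (V (vscale (s + h) x) - V (vscale s x)) / h - dot g x
        = (V (vscale (s + h) x) - V (vscale s x) - h * dot g x) / h by field.
rewrite Rabs_div //.
apply: (Rle_lt_trans _ (eps / (nx + 1) * nx)).
  by apply/Rle_div_l => //; lra.
have -> : eps / (nx + 1) * nx = eps - eps / (nx + 1) by field; lra.
have Heps' : 0 < eps / (nx + 1) by apply: Rdiv_lt_0_compat; lra.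
lra.
Qed.

Section RayInequality.
Variables (N : nat) (alpha theta : R) (V : vec N -> R) (gradV : vec N -> vec N) (x : vec N).
Hypothesis HN : (3 <= N)%coq_nat.
Hypothesis Halpha : 0 < alpha.
Hypothesis Hgrad : forall y, has_gradient V y (gradV y).
Hypothesis Hx : x <> vzero.

Definition ray_profile (s : R) : R :=
  (INR N * V (vscale s x) + dot (gradV (vscale s x)) (vscale s x)) / rpow s alpha
  + (INR N - 2) ^ 3 * theta / (4 * rpow s (alpha + 2) * vnorm x ^ 2).

Definition theta_coef : R := (INR N - 2) ^ 3 * theta / (4 * vnorm x ^ 2).

Definition Phi (s : R) : R :=
  s ^ N * V (vscale s x) - ray_profile 1 / (INR N + alpha) * rpow s (INR N + alpha)
  + theta_coef / (INR N - 2) * s ^ (N - 2).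

Lemma ray_profile_1 : ray_profile 1 = INR N * V x + dot (gradV x) x + theta_coef.
Proof.
have Hnx := vnorm_pos N x Hx.
rewrite /ray_profile /theta_coef !rpow_1 dot_scale_r vscale_1.
by field; nra.
Qed.

Lemma Phi_derive (s : R) : 0 < s ->
  is_derive Phi s (Rpower s (INR N + alpha - 1) * (ray_profile s - ray_profile 1)).
Proof.
move=> Hs; apply: is_derive_congr_val.
  apply: is_derive_plus; first apply: is_derive_minus.
  - apply: (is_derive_mult _ _ _ _ _ _ _ Rmult_comm).
      by apply: is_derive_pow; exact: is_derive_id.
    exact: is_derive_along_ray.
  - by apply: is_derive_scal; exact: is_derive_rpow.
  - by apply: is_derive_scal; apply: is_derive_pow; exact: is_derive_id.
have HN3 := INR_N_ge3 N HN.
have Hnx := vnorm_pos N x Hx.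
have HP : 0 < Rpower s alpha by apply: exp_pos.
have Eexp : INR N + alpha - 1 = INR (N - 3) + (INR 2 + alpha).
  by rewrite minus_INR /=; [ring|lia].
have Eexp2 : alpha + 2 = INR 2 + alpha by rewrite /=; ring.
have EsN : s ^ N = s ^ (N - 3) * s ^ 3 by rewrite -pow_add; f_equal; lia.
have -> : N.-1 = (N - 3 + 2)%nat by lia.
have -> : (N - 2).-1 = (N - 3)%nat by lia.
set r1 := ray_profile 1.
rewrite /minus /plus /opp /mult /one /id /= /ray_profile /theta_coef.
rewrite !rpow_pos // Eexp Eexp2 !Rpower_nat_plus // pow_add EsN dot_scale_r INR_N_sub2 //.
by field; repeat split; nra.
Qed.

Lemma Phi_continuous_0 : continuous Phi 0.
Proof.
apply: continuous_plus; first apply: continuous_minus.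
- apply: ex_derive_continuous; eexists.
  apply: (is_derive_mult _ _ _ _ _ _ _ Rmult_comm).
    by apply: is_derive_pow; exact: is_derive_id.
  exact: is_derive_along_ray.
- apply: continuous_mult; first exact: continuous_const.
  by apply: continuous_rpow_0; have := INR_N_ge3 N HN; lra.
- apply: ex_derive_continuous; eexists.
  by apply: is_derive_scal; apply: is_derive_pow; exact: is_derive_id.
Qed.

Lemma Phi_gap (t : R) :
  (alpha + INR N * rpow t (INR N + alpha)) * V x
  - (INR N + alpha) * t ^ N * V (vscale t x)
  + (rpow t (INR N + alpha) - 1) * dot (gradV x) x
  + (INR N - 2) ^ 2 * theta * gfun N alpha t / (4 * vnorm x ^ 2)
  = (INR N + alpha) * (Phi 1 - Phi t).
Proof.
have HN3 := INR_N_ge3 N HN.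
have Hnx := vnorm_pos N x Hx.
rewrite /Phi ray_profile_1 rpow_1 !pow1 vscale_1 /gfun /theta_coef.
by field; repeat split; nra.
Qed.

Hypothesis Hmono : forall s t, 0 < s -> s <= t -> ray_profile t <= ray_profile s.

Lemma Phi_le_1 (t : R) : 0 <= t -> Phi t <= Phi 1.
Proof.
have Hmax : forall t, 0 < t -> Phi t <= Phi 1.
  apply: (max_at_one _ _ Phi_derive) => s Hs.
  have HP : 0 < Rpower s (INR N + alpha - 1) by apply: exp_pos.
  have Hsign : (s - 1) * (ray_profile s - ray_profile 1) <= 0.
    case: (Rlt_le_dec s 1) => Hs1.
    - by have := Hmono s 1 Hs ltac:(lra); nra.
    - by have := Hmono 1 s Rlt_0_1 Hs1; nra.
  by nra.
move=> Ht; case: (Req_dec t 0) => [->|Ht0]; last by apply: Hmax; lra.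
exact: (le_at_0_of_continuous _ _ Phi_continuous_0 Hmax).
Qed.

Lemma ray_inequality (t : R) : 0 <= t ->
  (alpha + INR N * rpow t (INR N + alpha)) * V x
  - (INR N + alpha) * t ^ N * V (vscale t x)
  + (rpow t (INR N + alpha) - 1) * dot (gradV x) x
  >= - ((INR N - 2) ^ 2 * theta * gfun N alpha t) / (4 * vnorm x ^ 2).
Proof.
move=> Ht; have Hgap := Phi_gap t; have Hle := Phi_le_1 t Ht.
have HN3 := INR_N_ge3 N HN.
have Hnx := vnorm_pos N x Hx.
nra.
Qed.

End RayInequality.

(* Lemma 2.1. *)
Theorem lemma2p1 (N : nat) (alpha : R) (HN : (3 <= N)%coq_nat)
  (Halpha : 0 < alpha < INR N) :
  (gfun N alpha 1 = 0 /\ hfun N alpha 1 = 0 /\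
   forall t, 0 <= t -> t <> 1 ->
     gfun N alpha t > gfun N alpha 1 /\ hfun N alpha t > hfun N alpha 1) /\
  (forall (V : vec N -> R) (gradV : vec N -> vec N) (theta : R),
     C1_with_grad V gradV -> V3 N alpha V gradV theta ->
     forall (t : R) (x : vec N), 0 <= t -> x <> vzero ->
       (alpha + INR N * rpow t (INR N + alpha)) * V x
       - (INR N + alpha) * t ^ N * V (vscale t x)
       + (rpow t (INR N + alpha) - 1) * dot (gradV x) x
       >= - ((INR N - 2) ^ 2 * theta * gfun N alpha t) / (4 * vnorm x ^ 2)).
Proof.
split; first exact: gfun_hfun_strict_min HN (proj1 Halpha).
move=> V gradV theta [Hgrad _] [_ Hmono] t x Ht Hx.
exact: (ray_inequality N alpha theta V gradV x HN (proj1 Halpha) Hgrad Hx (Hmono x Hx) t Ht).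
Qed.
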